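(* Let $\mathcal{H}$ be a complex Hilbert space, let $N(\cdot)$ be a weakly unitarily invariant self-adjoint algebra norm on $\mathbb{B}(\mathcal{H})$, and let $T\in\mathbb{B}(\mathcal{H})$ with $\|T\|\le 1$. Then $$w_{N}(TT^* - T^*T) \leq 4N(T)\sup_{U\in\mathcal{U}}N(U).$$
   Context: $\mathbb{B}(\mathcal{H})$ is the algebra of bounded linear operators on $\mathcal{H}$, $\|\cdot\|$ the usual operator norm, and $\mathcal{U}$ the group of unitary operators in $\mathbb{B}(\mathcal{H})$. A norm $N(\cdot)$ on $\mathbb{B}(\mathcal{H})$ is an algebra norm if $N(TS)\le N(T)N(S)$ for all $T,S$; self-adjoint if $N(T^* )=N(T)$ for all $T$; weakly unitarily invariant if $N(U^*TU)=N(T)$ for all $T\in\mathbb{B}(\mathcal{H})$, $U\in\mathcal{U}$. For $A\in\mathbb{B}(\mathcal{H})$, ${\rm Re}(A)=\frac{A+A^*}{2}$. The generalized numerical radius is $w_N(T)=\sup_{\theta\in\mathbb{R}} N\big({\rm Re}(e^{i\theta}T)\big)$. *)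

From HB Require Import structures.
From mathcomp Require Import all_boot all_order all_algebra.
From mathcomp Require Import all_classical all_reals all_analysis.
From mathcomp Require Import complex.
From Stdlib Require Import ClassicalEpsilon.
Set Implicit Arguments. Unset Strict Implicit. Unset Printing Implicit Defensive.
Import Order.TTheory GRing.Theory Num.Theory.
Local Open Scope ring_scope.

Section Hilbert.
Variables (R : realType) (V : lmodType R[i]) (ip : V -> V -> R[i]).

Definition is_inner_product : Prop :=
  [/\ (forall (a : R[i]) x y z, ip (a *: x + y) z = a * ip x z + ip y z),
      (forall x y, ip x y = conjc (ip y x)),
      (forall x, 0 <= complex.Re (ip x x) /\ complex.Im (ip x x) = 0) &
      (forall x, ip x x = 0 -> x = 0)].

Definition hnorm (x : V) : R := Num.sqrt (complex.Re (ip x x)).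

Definition hcomplete : Prop :=
  forall u : nat -> V,
    (forall e : R, 0 < e -> exists M : nat, forall m n : nat,
        (M <= m)%N -> (M <= n)%N -> hnorm (u m - u n) < e) ->
    exists l : V, forall e : R, 0 < e -> exists M : nat, forall n : nat,
        (M <= n)%N -> hnorm (u n - l) < e.

Definition bounded_op (T : V -> V) : Prop :=
  (forall (a : R[i]) x y, T (a *: x + y) = a *: T x + T y) /\
  exists M : R, forall x, hnorm (T x) <= M * hnorm x.

Definition opnorm (T : V -> V) : R :=
  sup [set hnorm (T x) | x in [set x | hnorm x <= 1]].

Definition is_adjoint (T S : V -> V) : Prop :=
  forall x y, ip (T x) y = ip x (S y).

Definition adj (T : V -> V) : V -> V :=
  epsilon (inhabits (fun x : V => x)) (is_adjoint T).

Definition opadd (T S : V -> V) : V -> V := fun x => T x + S x.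
Definition opscale (a : R[i]) (T : V -> V) : V -> V := fun x => a *: T x.
Definition opsub (T S : V -> V) : V -> V := fun x => T x - S x.

Definition unitary (U : V -> V) : Prop :=
  bounded_op U /\ adj U \o U = id /\ U \o adj U = id.

Definition ReOp (A : V -> V) : V -> V := opscale (2^-1) (opadd A (adj A)).

Definition is_op_norm (N : (V -> V) -> R) : Prop :=
  [/\ (forall T, bounded_op T -> 0 <= N T),
      (forall T, bounded_op T -> N T = 0 -> T = (fun _ => 0)),
      (forall a T, bounded_op T -> N (opscale a T) = Normc.normc a * N T) &
      (forall T S, bounded_op T -> bounded_op S -> N (opadd T S) <= N T + N S)].

Definition algebra_norm (N : (V -> V) -> R) : Prop :=
  is_op_norm N /\
  forall T S, bounded_op T -> bounded_op S -> N (T \o S) <= N T * N S.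

Definition selfadjoint_norm (N : (V -> V) -> R) : Prop :=
  forall T, bounded_op T -> N (adj T) = N T.

Definition weakly_unitarily_invariant (N : (V -> V) -> R) : Prop :=
  forall T U, bounded_op T -> unitary U -> N (adj U \o T \o U) = N T.

Definition expi (t : R) : R[i] := (cos t +i* sin t)%C.

Definition wN (N : (V -> V) -> R) (T : V -> V) : \bar R :=
  ereal_sup [set (N (ReOp (opscale (expi t) T)))%:E | t in [set: R]].

Definition sup_unitary (N : (V -> V) -> R) : \bar R :=
  ereal_sup [set (N U)%:E | U in unitary].

End Hilbert.

From HB Require Import structures.
From mathcomp Require Import all_boot all_order all_algebra.
From mathcomp Require Import all_classical all_reals all_analysis.
From mathcomp Require Import complex.
From mathcomp Require Import ring lra.
From Stdlib Require Import ClassicalEpsilon.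
Set Implicit Arguments. Unset Strict Implicit. Unset Printing Implicit Defensive.
Import Order.TTheory GRing.Theory Num.Theory.
Local Open Scope complex_scope.
Local Open Scope ring_scope.

(* Since N is self-adjoint, N(Re X) <= N(X) for every X, so
   w_N(TT* - T*T) <= N(TT* - T*T) <= 2 N(T)^2.  Writing T = Re T + i Re(-iT),
   it remains to bound N(A) by sup_U N(U) for a self-adjoint contraction A,
   and A = ((A + iS) + (A - iS))/2 with S = sqrt(1 - A^2) is a mean of two
   unitaries.  S is built as 1 - Y, where Y is the strong limit of q_k(A^2)
   for the polynomials q_0 = 0, q_(k+1) = (X + q_k^2)/2; these have
   nonnegative coefficients, and so do the differences q_m - q_k for k <= m,
   hence |q_m(A^2) - q_k(A^2)| <= q_m(1) - q_k(1), and the values q_k(1)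
   increase and stay below 1.  Adjoints exist by the Riesz representation theorem,
   proved through nearest points in closed subspaces. *)

Local Notation normc := Normc.normc.
Local Notation Re := complex.Re.

Section HilbertSpace.
Variables (R : realType) (V : lmodType R[i]) (ip : V -> V -> R[i]).
Hypothesis Hip : is_inner_product ip.
Hypothesis Hcomplete : hcomplete ip.
Local Notation nrm := (hnorm ip).

Lemma normc_ge0 (a : R[i]) : 0 <= normc a.
Proof. by case: a => ? ?; exact: sqrtr_ge0. Qed.

Lemma normc_real (r : R) : 0 <= r -> normc r%:C = r.
Proof. by move=> r0; rewrite /= expr0n addr0 sqrtr_sqr ger0_norm. Qed.

Lemma mulcJ (a : R[i]) : a * a^*%R = (normc a ^+ 2)%:C.
Proof. by rewrite -normCK /= rmorphXn. Qed.

Lemma mulJc (a : R[i]) : a^*%R * a = (normc a ^+ 2)%:C.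
Proof. by rewrite mulrC mulcJ. Qed.

Lemma normc_conj (a : R[i]) : normc a^*%R = normc a.
Proof. by case: a => p q /=; rewrite sqrrN. Qed.

(* [normcN] (stated on [Rcomplex R]) and [conjc_real] (stated with [conjc])
   do not rewrite terms of [R[i]] written with the generic operations. *)
Lemma normc_opp (a : R[i]) : normc (- a) = normc a.
Proof. exact: normcN. Qed.

Lemma conj_real (r : R) : (r%:C)^*%R = r%:C.
Proof. exact: conjc_real. Qed.

Lemma ReM_real (r : R) (z : R[i]) : Re (r%:C * z) = r * Re z.
Proof. by case: z => a b /=; ring. Qed.

Lemma ReN (z : R[i]) : Re (- z) = - Re z.
Proof. by case: z. Qed.

Lemma normci : normc ('i%C : R[i]) = 1.
Proof. by rewrite /= expr0n add0r expr1n sqrtr1. Qed.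

Lemma conji : ('i%C : R[i])^*%R = - 'i%C.
Proof. by change (conjc ('i%C : R[i]) = - 'i%C); rewrite /=; simpc. Qed.

Lemma mulii : ('i%C : R[i]) * 'i%C = -1.
Proof. by rewrite -expr2 sqr_i. Qed.

Lemma normc2 : normc (2%:R : R[i]) = 2.
Proof. by have := @normcMn R 1 2; rewrite Normc.normc1. Qed.

Lemma normc_half : normc ((2 : R[i])^-1) = 2^-1.
Proof. by rewrite Normc.normcV normc2. Qed.

Lemma normc_expi (t : R) : normc (expi t) = 1.
Proof. by rewrite /expi /= cos2Dsin2 sqrtr1. Qed.

Lemma eventually_inv_lt (e : R) : 0 < e ->
  exists M : nat, forall n, (M <= n)%N -> n.+1%:R^-1 < e.
Proof.
move=> e0; exists (Num.Def.truncn e^-1) => n hn.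
have h1 := truncnS_gt e^-1.
have h2 : (Num.Def.truncn e^-1).+1%:R <= n.+1%:R :> R by rewrite ler_nat ltnS.
by rewrite -[e]invrK ltf_pV2 ?posrE ?invr_gt0 //; apply: lt_le_trans h2.
Qed.

Lemma le_add_eps (a b : R) : (forall e, 0 < e -> a <= b + e) -> a <= b.
Proof. by move=> h; apply/ler_addgt0Pr => e e0; exact: h. Qed.

Lemma le0_of_le_mul_eps (a c : R) : 0 <= c ->
  (forall e, 0 < e -> a <= e * c) -> a <= 0.
Proof.
move=> c0 h; apply: le_add_eps => e e0; rewrite add0r.
have c1 : 0 < c + 1 by lra.
have := h (e / (c + 1)) (divr_gt0 e0 c1).
have : e / (c + 1) * c <= e by rewrite mulrAC ler_pdivrMr //; apply: ler_wpM2l; lra.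
lra.
Qed.

Lemma ipDl x y z : ip (x + y) z = ip x z + ip y z.
Proof. by case: Hip => h _ _ _; have := h 1 x y z; rewrite scale1r mul1r. Qed.

Lemma ip0l z : ip 0 z = 0.
Proof. by apply: (addrI (ip 0 z)); rewrite -ipDl !addr0. Qed.

Lemma ipZl a x z : ip (a *: x) z = a * ip x z.
Proof. by case: Hip => h _ _ _; have := h a x 0 z; rewrite addr0 ip0l addr0. Qed.

Lemma ipNl x z : ip (- x) z = - ip x z.
Proof. by rewrite -scaleN1r ipZl mulN1r. Qed.

Lemma ipBl x y z : ip (x - y) z = ip x z - ip y z.
Proof. by rewrite ipDl ipNl. Qed.

Lemma ipC x y : ip x y = (ip y x)^*%R.
Proof. by case: Hip => _ h _ _; exact: h. Qed.

Lemma ip0r z : ip z 0 = 0.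
Proof. by rewrite ipC ip0l rmorph0. Qed.

Lemma ipDr x y z : ip x (y + z) = ip x y + ip x z.
Proof. by rewrite ipC ipDl rmorphD /= -!ipC. Qed.

Lemma ipZr a x z : ip x (a *: z) = a^*%R * ip x z.
Proof. by rewrite ipC ipZl rmorphM /= -ipC. Qed.

Lemma ipNr x z : ip x (- z) = - ip x z.
Proof. by rewrite -scaleN1r ipZr rmorphN /= rmorph1 mulN1r. Qed.

Lemma ipBr x y z : ip x (y - z) = ip x y - ip x z.
Proof. by rewrite ipDr ipNr. Qed.

Lemma ip_eq0 x : ip x x = 0 -> x = 0.
Proof. by case: Hip => _ _ _; apply. Qed.

Lemma ipr_inj u v : (forall z, ip z u = ip z v) -> u = v.
Proof. by move=> h; apply/eqP; rewrite -subr_eq0; apply/eqP/ip_eq0; rewrite ipBr h subrr. Qed.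

Lemma ip_self x : ip x x = (nrm x ^+ 2)%:C.
Proof.
case: Hip => _ _ /(_ x) [h1 h2] _; rewrite /hnorm sqr_sqrtr //.
by move: h1 h2; case: (ip x x) => a b /= _ ->.
Qed.

Lemma hnorm_ge0 x : 0 <= nrm x.
Proof. exact: sqrtr_ge0. Qed.

Lemma hnorm_eq0 x : nrm x = 0 -> x = 0.
Proof. by move=> h; apply: ip_eq0; rewrite ip_self h expr0n. Qed.

Lemma hnorm0 : nrm 0 = 0.
Proof. by rewrite /hnorm ip0l sqrtr0. Qed.

Lemma hnormZ a x : nrm (a *: x) = normc a * nrm x.
Proof.
rewrite {1}/hnorm ipZl ipZr mulrA mulcJ ip_self -rmorphM -exprMn /= sqrtr_sqr.
by rewrite ger0_norm // mulr_ge0 ?normc_ge0 ?hnorm_ge0.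
Qed.

Lemma hnormN x : nrm (- x) = nrm x.
Proof. by rewrite -scaleN1r hnormZ normc_opp Normc.normc1 mul1r. Qed.

Lemma hnorm_distC x y : nrm (x - y) = nrm (y - x).
Proof. by rewrite -hnormN opprB. Qed.

Lemma hnormD_sqr x y : nrm (x + y) ^+ 2 = nrm x ^+ 2 + nrm y ^+ 2 + 2 * Re (ip x y).
Proof.
have e : ip (x + y) (x + y) = ip x x + ip y y + (ip x y + (ip x y)^*%R).
  by rewrite !ipDl !ipDr [ip y x]ipC; ring.
move: e; rewrite !ip_self; case: (ip x y) => a b /=; simpc.
by case=> ->; ring.
Qed.

Lemma parallelogram u v :
  nrm (u - v) ^+ 2 + nrm (u + v) ^+ 2 = 2 * nrm u ^+ 2 + 2 * nrm v ^+ 2.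
Proof. by rewrite !hnormD_sqr hnormN ipNr ReN; ring. Qed.

Lemma Re_ip_le x y : Re (ip x y) <= nrm x * nrm y.
Proof.
have [/hnorm_eq0 ->|nx] := eqVneq (nrm x) 0; first by rewrite ip0l /= hnorm0 mul0r.
have [/hnorm_eq0 ->|ny] := eqVneq (nrm y) 0; first by rewrite ip0r /= hnorm0 mulr0.
have nx0 : 0 < nrm x by rewrite lt_def nx hnorm_ge0.
have ny0 : 0 < nrm y by rewrite lt_def ny hnorm_ge0.
(* 0 <= |(|y|) x - (|x|) y|^2 *)
have h := hnormD_sqr ((nrm y)%:C *: x) (- ((nrm x)%:C *: y)).
rewrite hnormN ipNr ReN !hnormZ ipZl ipZr conj_real !ReM_real in h.
rewrite !normc_real ?hnorm_ge0 // in h.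
move: (sqr_ge0 (nrm ((nrm y)%:C *: x - (nrm x)%:C *: y))); rewrite h => h0.
have p0 : 0 < nrm x * nrm y by rewrite mulr_gt0.
nra.
Qed.

Lemma cauchy_schwarz x y : normc (ip x y) <= nrm x * nrm y.
Proof.
(* apply [Re_ip_le] to the rotated vector (ip x y)^* x *)
have h := Re_ip_le ((ip x y)^*%R *: x) y.
rewrite ipZl mulJc hnormZ normc_conj /= -mulrA in h.
have := normc_ge0 (ip x y); have := mulr_ge0 (hnorm_ge0 x) (hnorm_ge0 y).
move: h; set m := nrm x * nrm y; set n := normc _; nra.
Qed.

Lemma ler_hnormD x y : nrm (x + y) <= nrm x + nrm y.
Proof.
have h := hnormD_sqr x y; have := Re_ip_le x y.
have := hnorm_ge0 x; have := hnorm_ge0 y; have := hnorm_ge0 (x + y).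
nra.
Qed.

Lemma ip_suml n (f : 'I_n -> V) y : ip (\sum_(i < n) f i) y = \sum_(i < n) ip (f i) y.
Proof. exact: (big_morph (ip^~ y) (fun a b => ipDl a b y) (ip0l y)). Qed.

Lemma ip_sumr n (f : 'I_n -> V) y : ip y (\sum_(i < n) f i) = \sum_(i < n) ip y (f i).
Proof. exact: (big_morph (ip y) (ipDr y) (ip0r y)). Qed.

Lemma ler_hnorm_sum n (f : 'I_n -> V) : nrm (\sum_(i < n) f i) <= \sum_(i < n) nrm (f i).
Proof.
elim/big_ind2: _ => [|x1 x2 y1 y2 h1 h2|//]; first by rewrite hnorm0.
by apply: le_trans (ler_hnormD _ _) _; exact: lerD.
Qed.

Definition hcvg (u : nat -> V) (l : V) :=
  forall e : R, 0 < e -> exists M, forall n, (M <= n)%N -> nrm (u n - l) < e.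

Definition hcauchy (u : nat -> V) :=
  forall e : R, 0 < e -> exists M, forall m n, (M <= m)%N -> (M <= n)%N ->
    nrm (u m - u n) < e.

Lemma hcvg_unique u l1 l2 : hcvg u l1 -> hcvg u l2 -> l1 = l2.
Proof.
move=> h1 h2; apply/eqP; rewrite -subr_eq0; apply/eqP/hnorm_eq0.
apply/le_anti; rewrite hnorm_ge0 andbT; apply: le_add_eps => e e0; rewrite add0r.
have e2 : 0 < e / 2 by rewrite divr_gt0.
have [M1 hM1] := h1 _ e2; have [M2 hM2] := h2 _ e2.
have := hM1 (maxn M1 M2) (leq_maxl _ _); have := hM2 (maxn M1 M2) (leq_maxr _ _).
set u0 := u (maxn M1 M2) => a b.
have := ler_hnormD (l1 - u0) (u0 - l2); rewrite addrA subrK [nrm (l1 - u0)]hnorm_distC.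
lra.
Qed.

Lemma hcvg_le (u v : nat -> V) l m c : 0 <= c -> hcvg u l ->
  (forall n, nrm (v n - m) <= c * nrm (u n - l)) -> hcvg v m.
Proof.
move=> c0 hu h e e0.
have c1 : 0 < c + 1 by lra.
have [M hM] := hu (e / (c + 1)) (divr_gt0 e0 c1).
exists M => n hn; have := hM n hn; rewrite ltr_pdivlMr // => h1.
have h3 : c * nrm (u n - l) <= (c + 1) * nrm (u n - l).
  by apply: ler_wpM2r; [exact: hnorm_ge0 | lra].
move: h1 (h n) h3; rewrite mulrC; set a := _ * nrm _; set b := _ * nrm _; lra.
Qed.

Lemma hcvg_ext (u v : nat -> V) l : hcvg u l -> (forall n, u n = v n) -> hcvg v l.
Proof. by move=> hu h; apply: (hcvg_le ler01 hu) => n; rewrite h mul1r. Qed.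

Lemma hcvg_cst l : hcvg (fun _ => l) l.
Proof. by move=> e e0; exists 0%N => n _; rewrite subrr hnorm0. Qed.

Lemma hcvg_shift u l : hcvg u l -> hcvg (fun n => u n.+1) l.
Proof. by move=> h e /h [M hM]; exists M => n hn; apply/hM/leqW. Qed.

Lemma hcvgD u v l m : hcvg u l -> hcvg v m -> hcvg (fun n => u n + v n) (l + m).
Proof.
move=> hu hv e e0.
have e2 : 0 < e / 2 by rewrite divr_gt0.
have [M1 h1] := hu _ e2; have [M2 h2] := hv _ e2.
exists (maxn M1 M2) => n hn.
have := h1 n (leq_trans (leq_maxl _ _) hn); have := h2 n (leq_trans (leq_maxr _ _) hn).
have := ler_hnormD (u n - l) (v n - m); rewrite addrACA -opprD.
lra.
Qed.

Lemma hcvgZ (a : R[i]) u l : hcvg u l -> hcvg (fun n => a *: u n) (a *: l).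
Proof. by move=> hu; apply: (hcvg_le (normc_ge0 a) hu) => n; rewrite -scalerBr hnormZ. Qed.

Section NearestPoint.
Variable K : set V.
Hypothesis K0 : K 0.
Hypothesis K_lin : forall (a : R[i]) u v, K u -> K v -> K (a *: u + v).
Hypothesis K_closed : forall u l, (forall n, K (u n)) -> hcvg u l -> K l.
Variable x : V.

Lemma minimizing_hcauchy (d : R) (u : nat -> V) : 0 <= d ->
  (forall k, K k -> d <= nrm (x - k)) -> (forall n, K (u n)) ->
  (forall n, nrm (x - u n) < d + n.+1%:R^-1) -> hcauchy u.
Proof.
move=> d0 dle Ku ud e e0.
have Kmid m n : K (2^-1 *: (u m + u n)).
  by rewrite scalerDr; apply: K_lin => //; rewrite -[_ *: u n]addr0; apply: K_lin.
pose c := 4 * (2 * d + 1).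
have c0 : 0 < c by rewrite /c; lra.
have [M hM] := eventually_inv_lt (divr_gt0 (exprn_gt0 2 e0) c0).
have near_inf j : (M <= j)%N -> nrm (x - u j) ^+ 2 < d ^+ 2 + e ^+ 2 / 4.
  move=> /hM; rewrite ltr_pdivlMr // /c.
  have := ud j; have := dle _ (Ku j).
  have : 0 < (j.+1%:R : R)^-1 <= 1 by rewrite invr_gt0 ltr0n invf_le1 ?ler1n ?ltr0n.
  move: (j.+1%:R^-1) => dl /andP[dl0 dl1] h2 h4 h1.
  have h3 : dl * dl <= dl by have := ler_wpM2l (ltW dl0) dl1; rewrite mulr1.
  nra.
exists M => m n hm hn.
(* the midpoint of u m and u n lies in K, hence is at distance >= d from x *)
have P := parallelogram (x - u m) (x - u n).
rewrite (_ : x - u m + (x - u n) = 2%:R *: (x - 2^-1 *: (u m + u n))) in P; last first.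
  rewrite scalerBr scalerA mulfV ?scale1r ?pnatr_eq0 //.
  by rewrite scaler_nat mulr2n opprD addrACA.
rewrite (_ : x - u m - (x - u n) = u n - u m) in P; last first.
  by rewrite opprB addrC addrA subrK.
rewrite hnormZ normc2 in P.
have := dle _ (Kmid m n); rewrite [nrm (u m - u n)]hnorm_distC.
move: P (near_inf m hm) (near_inf n hn).
set A := nrm (u n - u m); set B := nrm (x - _ *: _) => h3 h1 h2 h4.
have hA : 0 <= A by exact: hnorm_ge0.
have hB : d ^+ 2 <= B ^+ 2 by rewrite ler_sqr ?nnegrE // (le_trans d0 h4).
have hA2 : A ^+ 2 < e ^+ 2 by nra.
by rewrite -(ltr_pXn2r (n := 2)) // ?nnegrE ?(ltW e0).
Qed.

Lemma nearest_point_exists :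
  exists2 k : V, K k & forall k', K k' -> nrm (x - k) <= nrm (x - k').
Proof.
pose D : set R := [set nrm (x - k) | k in K]%classic.
have Dx : D (nrm (x - 0)) by exists 0.
have D_lb : lbound D 0 by move=> _ [k _ <-]; exact: hnorm_ge0.
have D_inf : has_inf D by split; [exists (nrm (x - 0)) | exists 0].
pose d := inf D.
have dle k : K k -> d <= nrm (x - k).
  by move=> Kk; have := ge_inf D_inf.2; apply; exists k.
have d0 : 0 <= d by apply: lb_le_inf => //; exists (nrm (x - 0)).
have adherent n : exists k, K k /\ nrm (x - k) < d + n.+1%:R^-1.
  have [_ [k Kk <-] lt] := @inf_adherent R D (n.+1%:R^-1) ltac:(by []) D_inf.
  by exists k.
have [u hu] := boolp.choice adherent.
have [k hk] := Hcomplete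
  (minimizing_hcauchy d0 dle (fun n => (hu n).1) (fun n => (hu n).2)).
have Kk : K k := K_closed (fun n => (hu n).1) hk.
exists k => // k' Kk'; apply: (le_trans _ (dle _ Kk')); apply: le_add_eps => e e0.
have e2 : 0 < e / 2 by rewrite divr_gt0.
have [M1 hM1] := hk (e / 2) e2; have [M2 hM2] := eventually_inv_lt e2.
set N := maxn M1 M2.
have h1 := hM1 N (leq_maxl _ _).
have := ler_hnormD (x - u N) (u N - k); rewrite addrA subrK => h2.
have := hM2 N (leq_maxr _ _); have := (hu N).2; move: N.+1%:R^-1 => i.
lra.
Qed.

Lemma nearest_point_orthogonal k : K k ->
  (forall k', K k' -> nrm (x - k) <= nrm (x - k')) ->
  forall k', K k' -> ip k' (x - k) = 0.
Proof.
move=> Kk kmin k' Kk'; set w := x - k.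
suff p0 : ip w k' = 0 by rewrite ipC p0 rmorph0.
apply: Normc.eq0_normc.
set p := ip w k'; set np := normc p; set nk := nrm k'.
(* compare w with w - t p k' for a small t > 0 *)
pose t := (nk ^+ 2 + 1)^-1.
have t0 : 0 < t by rewrite /t invr_gt0; have := sqr_ge0 nk; lra.
have tk : t * nk ^+ 2 < 1.
  by rewrite /t mulrC ltr_pdivrMr; [lra | have := sqr_ge0 nk; lra].
pose lam := t%:C * p.
have Kl : K (k + lam *: k') by rewrite addrC; apply: K_lin.
have := kmin _ Kl; rewrite opprD addrA -/w => h.
have e2 := hnormD_sqr w (- (lam *: k')).
rewrite hnormN hnormZ ipNr ipZr /lam rmorphM /= conj_real in e2.
rewrite -/p Normc.normcM normc_real ?(ltW t0) // -(mulrA t%:C) mulJc in e2.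
rewrite -rmorphM -rmorphN [Re _]/= -/np in e2.
have h1 : nrm w ^+ 2 <= nrm (w - lam *: k') ^+ 2.
  by rewrite ler_sqr ?nnegrE ?hnorm_ge0.
rewrite e2 -/nk in h1.
have h2 : 0 <= t * (np ^+ 2 * (t * nk ^+ 2 - 2)).
  have -> : t * (np ^+ 2 * (t * nk ^+ 2 - 2)) =
    (t * np * nk) ^+ 2 + 2 * - (t * np ^+ 2) by ring.
  lra.
rewrite pmulr_rge0 // in h2.
have := normc_ge0 p; rewrite -/np; nra.
Qed.

End NearestPoint.

Lemma riesz_representation (phi : V -> R[i]) (M : R) :
  (forall a x y, phi (a *: x + y) = a * phi x + phi y) ->
  (forall x, normc (phi x) <= M * nrm x) ->
  exists z, forall x, phi x = ip x z.
Proof.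
move=> phi_lin phi_bnd.
have phi0 : phi 0 = 0.
  by apply: (addrI (phi 0)); have := phi_lin 1 0 0; rewrite scale1r mul1r !addr0 => <-.
have phiZ a x : phi (a *: x) = a * phi x by rewrite -[a *: x]addr0 phi_lin phi0 addr0.
have phiB x y : phi (x - y) = phi x - phi y.
  by rewrite -scaleN1r addrC phi_lin mulN1r addrC.
have [[x0 nz]|phi_eq0] := pselect (exists x0, phi x0 != 0); last first.
  exists 0 => x; rewrite ip0r; apply/eqP; apply: contra_notT phi_eq0 => nz; by exists x.
pose M' : R := `|M| + 1.
have M'0 : 0 < M' by rewrite /M' ltr_wpDl.
have phi_bnd' x : normc (phi x) <= M' * nrm x.
  apply: le_trans (phi_bnd x) _; apply: ler_wpM2r; first exact: hnorm_ge0.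
  by rewrite /M' (le_trans (ler_norm M)) // lerDl.
pose K : set V := [set k | phi k = 0]%classic.
have K_lin a u v : K u -> K v -> K (a *: u + v).
  by rewrite /K /= phi_lin => -> ->; rewrite mulr0 addr0.
have K_closed u l : (forall n, K (u n)) -> hcvg u l -> K l.
  move=> Ku hu; apply: Normc.eq0_normc; apply/le_anti; rewrite normc_ge0 andbT.
  apply: le_add_eps => e e0; rewrite add0r.
  have [n hn] := hu (e / M') (divr_gt0 e0 M'0).
  have := hn n (leqnn n); have := phi_bnd' (u n - l).
  rewrite phiB Ku sub0r normc_opp ltr_pdivlMr // => h1 h2.
  nra.
have [k Kk kmin] := @nearest_point_exists K phi0 K_lin K_closed x0.
have orth := nearest_point_orthogonal K_lin Kk kmin.
pose w := x0 - k.
have phiw : phi w = phi x0 by rewrite phiB Kk subr0.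
have wnz : ip w w != 0.
  by apply/eqP => /ip_eq0 w0; move: nz; rewrite -phiw w0 phi0 eqxx.
exists (((phi w)^*%R / (ip w w)^*%R) *: w) => x.
have Ky : K (phi w *: x - phi x *: w) by rewrite /K /= phiB !phiZ mulrC subrr.
have := orth _ Ky; rewrite ipBl !ipZl => /eqP; rewrite subr_eq0 => /eqP h.
by rewrite ipZr fmorph_div /= !conjCK mulrAC h mulfK.
Qed.

Definition linop (T : V -> V) := forall (a : R[i]) x y, T (a *: x + y) = a *: T x + T y.
Definition bndop (T : V -> V) (M : R) := forall x, nrm (T x) <= M * nrm x.

Section LinearOperator.
Variable T : V -> V.
Hypothesis T_lin : linop T.

Lemma lin0 : T 0 = 0.
Proof. by apply: (addrI (T 0)); have := T_lin 1 0 0; rewrite !scale1r !addr0 => <-. Qed.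

Lemma linZ a x : T (a *: x) = a *: T x.
Proof. by rewrite -[a *: x]addr0 T_lin lin0 addr0. Qed.

Lemma linD x y : T (x + y) = T x + T y.
Proof. by have := T_lin 1 x y; rewrite !scale1r. Qed.

Lemma linB x y : T (x - y) = T x - T y.
Proof. by rewrite linD -scaleN1r linZ scaleN1r. Qed.

Lemma lin_sum n (f : 'I_n -> V) : T (\sum_(i < n) f i) = \sum_(i < n) T (f i).
Proof. exact: (big_morph T linD lin0). Qed.

End LinearOperator.

Lemma bounded_opP T : bounded_op ip T -> linop T /\ exists2 M, 0 <= M & bndop T M.
Proof.
case=> T_lin [M hM]; split => //; exists `|M| => // x.
by apply: le_trans (hM x) _; apply: ler_wpM2r; [exact: hnorm_ge0 | exact: ler_norm].
Qed.

Lemma is_adjoint_sym T S : is_adjoint ip T S -> is_adjoint ip S T.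
Proof. by move=> h x y; rewrite ipC -h -ipC. Qed.

Lemma is_adjoint_unique T S1 S2 : is_adjoint ip T S1 -> is_adjoint ip T S2 -> S1 = S2.
Proof. by move=> h1 h2; apply: boolp.funext => y; apply: ipr_inj => x; rewrite -h1 -h2. Qed.

Lemma adjE T S : is_adjoint ip T S -> adj ip T = S.
Proof. by move=> h; apply: (is_adjoint_unique _ h); apply: epsilon_spec; exists S. Qed.

Lemma is_adjoint_lin T S : is_adjoint ip T S -> linop S.
Proof. by move=> h a x y; apply: ipr_inj => z; rewrite -h !ipDr !ipZr !h. Qed.

Lemma is_adjoint_bnd T S M : 0 <= M -> is_adjoint ip T S -> bndop T M -> bndop S M.
Proof.
move=> M0 h hM y.
(* |S y|^2 = <T (S y), y> <= M |S y| |y| *)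
have e := h (S y) y; rewrite ip_self in e.
have h1 : nrm (S y) ^+ 2 <= M * nrm (S y) * nrm y.
  rewrite -(normc_real (sqr_ge0 (nrm (S y)))) -e.
  by apply: le_trans (cauchy_schwarz _ _) _; apply: ler_wpM2r; [exact: hnorm_ge0 | exact: hM].
have [->|Sy0] := eqVneq (nrm (S y)) 0; first by rewrite mulr_ge0 ?hnorm_ge0.
have Sy_gt0 : 0 < nrm (S y) by rewrite lt_def Sy0 hnorm_ge0.
by rewrite -mulrA [M * _]mulrCA expr2 ler_pM2l in h1.
Qed.

Lemma is_adjoint_bounded T S : is_adjoint ip T S -> bounded_op ip T -> bounded_op ip S.
Proof.
move=> h /bounded_opP [_ [M M0 hM]]; split; first exact: is_adjoint_lin h.
by exists M; exact: is_adjoint_bnd h hM.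
Qed.

Lemma adjoint_exists T : bounded_op ip T -> exists S, is_adjoint ip T S.
Proof.
case/bounded_opP => T_lin [M M0 hM].
have ex y : exists z, forall x, ip (T x) y = ip x z.
  apply: (@riesz_representation _ (M * nrm y)).
    by move=> a x x'; rewrite T_lin ipDl ipZl.
  move=> x; apply: le_trans (cauchy_schwarz _ _) _.
  by rewrite mulrAC; apply: ler_wpM2r; [exact: hnorm_ge0 | exact: hM].
by have [S hS] := boolp.choice ex; exists S.
Qed.

Lemma adjP T : bounded_op ip T -> is_adjoint ip T (adj ip T).
Proof. by move=> /adjoint_exists [S hS]; rewrite (adjE hS). Qed.

Lemma is_adjoint_comp T T' S S' : is_adjoint ip T T' -> is_adjoint ip S S' ->
  is_adjoint ip (T \o S) (S' \o T').
Proof. by move=> h1 h2 x y /=; rewrite h1 h2. Qed.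

Lemma is_adjoint_add T T' S S' : is_adjoint ip T T' -> is_adjoint ip S S' ->
  is_adjoint ip (opadd T S) (opadd T' S').
Proof. by move=> h1 h2 x y; rewrite /opadd ipDl ipDr h1 h2. Qed.

Lemma is_adjoint_scale a T T' : is_adjoint ip T T' ->
  is_adjoint ip (opscale a T) (opscale a^*%R T').
Proof. by move=> h x y; rewrite /opscale ipZl ipZr conjCK h. Qed.

Lemma bounded_comp T S : bounded_op ip T -> bounded_op ip S -> bounded_op ip (T \o S).
Proof.
case/bounded_opP => T_lin [M M0 hM]; case/bounded_opP => S_lin [N N0 hN].
split; first by move=> a x y /=; rewrite S_lin T_lin.
exists (M * N) => x /=; apply: le_trans (hM _) _.
by rewrite -mulrA ler_wpM2l.
Qed.

Lemma bounded_add T S : bounded_op ip T -> bounded_op ip S -> bounded_op ip (opadd T S).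
Proof.
case/bounded_opP => T_lin [M M0 hM]; case/bounded_opP => S_lin [N N0 hN].
split; first by move=> a x y; rewrite /opadd S_lin T_lin scalerDr addrACA.
exists (M + N) => x; rewrite /opadd; apply: le_trans (ler_hnormD _ _) _.
by rewrite mulrDl lerD.
Qed.

Lemma bounded_scale a T : bounded_op ip T -> bounded_op ip (opscale a T).
Proof.
case/bounded_opP => T_lin [M M0 hM].
split; first by move=> b x y; rewrite /opscale T_lin scalerDr !scalerA mulrC.
exists (normc a * M) => x; rewrite /opscale hnormZ -mulrA.
by apply: ler_wpM2l; [exact: normc_ge0 | exact: hM].
Qed.

Lemma opsubE (T S : V -> V) : opsub T S = opadd T (opscale (-1) S).
Proof. by apply: boolp.funext => x; rewrite /opsub /opadd /opscale scaleN1r. Qed.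

Lemma bounded_sub T S : bounded_op ip T -> bounded_op ip S -> bounded_op ip (opsub T S).
Proof. by move=> hT hS; rewrite opsubE; apply: bounded_add => //; apply: bounded_scale. Qed.

Lemma bounded_id : bounded_op ip id.
Proof. by split => //; exists 1 => x; rewrite mul1r. Qed.

Lemma contraction_of_opnorm T : bounded_op ip T -> opnorm ip T <= 1 -> bndop T 1.
Proof.
move=> hT T1; case/bounded_opP: (hT) => T_lin [M M0 hM] x.
move: T1; rewrite /opnorm; set E := (X in sup X) => T1.
have E_sup : has_sup E.
  split; first by exists (nrm (T 0)); exists 0 => //=; rewrite hnorm0 ler01.
  exists M => _ [y hy <-]; apply: le_trans (hM y) _.
  by rewrite -[leRHS]mulr1 ler_wpM2l.
rewrite mul1r; have [/hnorm_eq0 ->|nx] := eqVneq (nrm x) 0; first by rewrite lin0.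
have nx0 : 0 < nrm x by rewrite lt_def nx hnorm_ge0.
(* evaluate on the unit vector x / |x| *)
have nx_inv : normc (nrm x)^-1%:C = (nrm x)^-1 by rewrite normc_real ?invr_ge0 ?ltW.
have : nrm (T ((nrm x)^-1%:C *: x)) <= 1.
  apply: le_trans T1; apply: sup_upper_bound => //; exists ((nrm x)^-1%:C *: x) => //=.
  by rewrite hnormZ nx_inv mulVf.
by rewrite linZ // hnormZ nx_inv mulrC ler_pdivrMr // mul1r.
Qed.

Definition nneg_coef (q : {poly R}) := forall j, 0 <= q`_j.

Lemma nneg_coefD p q : nneg_coef p -> nneg_coef q -> nneg_coef (p + q).
Proof. by move=> hp hq j; rewrite coefD addr_ge0. Qed.

Lemma nneg_coefM p q : nneg_coef p -> nneg_coef q -> nneg_coef (p * q).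
Proof. by move=> hp hq j; rewrite coefM; apply: sumr_ge0 => i _; exact: mulr_ge0. Qed.

Lemma nneg_coefX : nneg_coef 'X.
Proof. by move=> j; rewrite coefX; case: (_ == _). Qed.

Lemma nneg_coefC c : 0 <= c -> nneg_coef c%:P.
Proof. by move=> c0 j; rewrite coefC; case: (_ == _). Qed.

Lemma nneg_coef_horner1 q : nneg_coef q -> 0 <= q.[1].
Proof. by move=> hq; rewrite horner_coef; apply: sumr_ge0 => i _; rewrite expr1n mulr1. Qed.

(* q_k increases coefficientwise to the Taylor series of 1 - sqrt(1 - X) *)
Fixpoint sqrt_seq (k : nat) : {poly R} :=
  if k is k'.+1 then (2^-1)%:P * ('X + sqrt_seq k' * sqrt_seq k') else 0.

Lemma sqrt_seq_nneg k : nneg_coef (sqrt_seq k).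
Proof.
elim: k => [j|k IH] /=; first by rewrite coef0.
apply: nneg_coefM; first by apply: nneg_coefC; rewrite invr_ge0.
by apply: nneg_coefD; [exact: nneg_coefX | exact: nneg_coefM].
Qed.

Lemma sqrt_seqS_sub_nneg k : nneg_coef (sqrt_seq k.+1 - sqrt_seq k).
Proof.
elim: k => [|k IH].
  rewrite /= !mul0r addr0 subr0; apply: nneg_coefM; last exact: nneg_coefX.
  by apply: nneg_coefC; rewrite invr_ge0.
have -> : sqrt_seq k.+2 - sqrt_seq k.+1 =
    (2^-1)%:P * ((sqrt_seq k.+1 - sqrt_seq k) * (sqrt_seq k.+1 + sqrt_seq k)).
  have gen (a b h X : {poly R}) :
    a = h * (X + b * b) -> h * (X + a * a) - a = h * ((a - b) * (a + b)).
    by move=> ->; ring.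
  exact: gen.
apply: nneg_coefM; first by apply: nneg_coefC; rewrite invr_ge0.
by apply: nneg_coefM => //; apply: nneg_coefD; exact: sqrt_seq_nneg.
Qed.

Lemma sqrt_seq_sub_nneg k m : (k <= m)%N -> nneg_coef (sqrt_seq m - sqrt_seq k).
Proof.
move=> /subnK <-; elim: (m - k)%N => [|n IH]; first by move=> j; rewrite subrr coef0.
rewrite addSn -[sqrt_seq _.+1](subrK (sqrt_seq (n + k))) -addrA.
by apply: nneg_coefD; [exact: sqrt_seqS_sub_nneg | exact: IH].
Qed.

Lemma sqrt_seq_at1 k : 0 <= (sqrt_seq k).[1] <= 1.
Proof.
elim: k => [|k IH]; first by rewrite /= horner0 lexx ler01.
by rewrite /= !hornerE; case/andP: IH => h1 h2; apply/andP; split; nra.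
Qed.

Lemma sqrt_seq_at1_le k m : (k <= m)%N -> (sqrt_seq k).[1] <= (sqrt_seq m).[1].
Proof.
move=> /sqrt_seq_sub_nneg /nneg_coef_horner1.
by rewrite hornerD hornerN subr_ge0.
Qed.

Lemma sqrt_seq_at1_cauchy e : 0 < e -> exists M, forall k m, (M <= k)%N -> (k <= m)%N ->
  (sqrt_seq m).[1] - (sqrt_seq k).[1] < e.
Proof.
move=> e0; pose S : set R := range (fun k => (sqrt_seq k).[1]).
have S_sup : has_sup S.
  split; first by exists (sqrt_seq 0).[1]; exists 0%N.
  by exists 1 => _ [k _ <-]; case/andP: (sqrt_seq_at1 k).
have [_ [M _ <-] hM] := sup_adherent e0 S_sup.
exists M => k m hk hm.
have h1 : (sqrt_seq m).[1] <= sup S by apply: sup_upper_bound => //; exists m.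
have := sqrt_seq_at1_le hk; lra.
Qed.

Section PolynomialCalculus.
Variable C : V -> V.
Hypotheses (C_lin : linop C) (C_selfadj : is_adjoint ip C C) (C_contr : bndop C 1).
Implicit Types (p q : {poly R}) (x : V).

Lemma iter_lin k : linop (iter k C).
Proof. by elim: k => [|k IH] a x y //=; rewrite IH C_lin. Qed.

Lemma iter_contr k x : nrm (iter k C x) <= nrm x.
Proof. by elim: k => [//|k IH] /=; apply: le_trans (C_contr _) _; rewrite mul1r. Qed.

Lemma iter_selfadj k : is_adjoint ip (iter k C) (iter k C).
Proof. by elim: k => [|k IH] x y //=; rewrite C_selfadj IH -iterSr. Qed.

Lemma iter_comm (B : V -> V) k x : (forall x, B (C x) = C (B x)) ->
  B (iter k C x) = iter k C (B x).
Proof. by move=> h; elim: k => [//|k IH] /=; rewrite h IH. Qed.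

Definition polyop (q : {poly R}) (x : V) : V :=
  \sum_(k < size q) (q`_k)%:C *: iter k C x.

Lemma polyop_widen n q x : (size q <= n)%N ->
  polyop q x = \sum_(k < n) (q`_k)%:C *: iter k C x.
Proof.
move=> hn; rewrite /polyop -(subnKC hn) big_split_ord /=.
rewrite [X in _ = _ + X]big1 ?addr0 // => i _.
by rewrite /= nth_default ?leq_addr // rmorph0 scale0r.
Qed.

Lemma polyop0 x : polyop 0 x = 0.
Proof. by rewrite /polyop size_poly0 big_ord0. Qed.

Lemma polyopC c x : polyop c%:P x = c%:C *: x.
Proof. by rewrite (@polyop_widen 1) ?size_polyC ?leq_b1 // big_ord1 /= coefC. Qed.

Lemma polyopD p q x : polyop (p + q) x = polyop p x + polyop q x.
Proof.
rewrite !(@polyop_widen (maxn (size p) (size q))) ?leq_maxl ?leq_maxr //;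
  last by apply: leq_trans (size_polyD _ _) _.
by rewrite -big_split /=; apply: eq_bigr => i _; rewrite coefD rmorphD scalerDl.
Qed.

Lemma polyopZ a q x : polyop (a *: q) x = a%:C *: polyop q x.
Proof.
rewrite !(@polyop_widen (size q)) ?size_scale_leq // scaler_sumr.
by apply: eq_bigr => i _; rewrite coefZ rmorphM scalerA.
Qed.

Lemma polyopB p q x : polyop (p - q) x = polyop p x - polyop q x.
Proof. by rewrite polyopD -[- q]scaleN1r polyopZ rmorphN rmorph1 scaleN1r. Qed.

Lemma polyopMX q x : polyop (q * 'X) x = polyop q (C x).
Proof.
rewrite (@polyop_widen (size q).+1); last first.
  by apply: leq_trans (size_polyMleq _ _) _; rewrite size_polyX addn2.
rewrite big_ord_recl /= coefMX eqxx rmorph0 scale0r add0r /polyop.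
by apply: eq_bigr => i _; rewrite coefMX /= -iterSr.
Qed.

Lemma polyopX x : polyop 'X x = C x.
Proof. by rewrite -['X]mul1r polyopMX -polyC1 polyopC rmorph1 scale1r. Qed.

Lemma polyop_lin q : linop (polyop q).
Proof.
move=> a x y; rewrite /polyop scaler_sumr -big_split; apply: eq_bigr => i _ /=.
by rewrite (iter_lin i) scalerDr !scalerA mulrC.
Qed.

Lemma polyop_comm (B : V -> V) : linop B -> (forall x, B (C x) = C (B x)) ->
  forall q x, B (polyop q x) = polyop q (B x).
Proof.
move=> B_lin BC q x; rewrite /polyop (lin_sum B_lin); apply: eq_bigr => i _.
by rewrite (linZ B_lin) iter_comm.
Qed.

Lemma polyopM p q x : polyop (p * q) x = polyop p (polyop q x).
Proof.
elim/poly_ind: p x => [|p c IH] x; first by rewrite mul0r !polyop0.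
rewrite mulrDl mulrAC !polyopD !polyopMX IH mul_polyC polyopZ polyopC.
by rewrite (polyop_comm C_lin).
Qed.

Lemma polyop_selfadj q : is_adjoint ip (polyop q) (polyop q).
Proof.
move=> x y; rewrite /polyop ip_suml ip_sumr; apply: eq_bigr => i _.
by rewrite ipZl ipZr conj_real iter_selfadj.
Qed.

Lemma polyop_contr q x : nneg_coef q -> nrm (polyop q x) <= q.[1] * nrm x.
Proof.
move=> hq; apply: le_trans (ler_hnorm_sum _) _.
rewrite horner_coef mulr_suml; apply: ler_sum => i _.
rewrite hnormZ normc_real // expr1n mulr1.
by apply: ler_wpM2l => //; exact: iter_contr.
Qed.

End PolynomialCalculus.

Section SelfAdjointContraction.
Variable A : V -> V.
Hypotheses (A_lin : linop A) (A_selfadj : is_adjoint ip A A) (A_contr : bndop A 1).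

Local Notation C := (A \o A).
Local Notation P k := (polyop C (sqrt_seq k)).

Lemma sqr_lin : linop C.
Proof. by move=> a x y /=; rewrite !A_lin. Qed.

Lemma sqr_selfadj : is_adjoint ip C C.
Proof. exact: is_adjoint_comp. Qed.

Lemma sqr_contr : bndop C 1.
Proof.
move=> x /=; apply: le_trans (A_contr _) _.
by rewrite !mul1r; have := A_contr x; rewrite mul1r.
Qed.

Lemma sqrt_seq_op_contr k x : nrm (P k x) <= nrm x.
Proof.
apply: le_trans (polyop_contr sqr_contr x (sqrt_seq_nneg k)) _.
have /andP[_ h] := sqrt_seq_at1 k; rewrite -[leRHS]mul1r.
by apply: ler_wpM2r => //; exact: hnorm_ge0.
Qed.

Lemma sqrt_seq_op_sub k m x : (k <= m)%N ->
  nrm (P m x - P k x) <= ((sqrt_seq m).[1] - (sqrt_seq k).[1]) * nrm x.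
Proof.
move=> km; rewrite -polyopB.
by have := polyop_contr sqr_contr x (sqrt_seq_sub_nneg km); rewrite hornerD hornerN.
Qed.

Lemma sqrt_seq_op_cauchy x : hcauchy (fun k => P k x).
Proof.
move=> e e0.
have c1 : 0 < nrm x + 1 by have := hnorm_ge0 x; lra.
have [M hM] := sqrt_seq_at1_cauchy (divr_gt0 e0 c1).
have key k m : (M <= k)%N -> (k <= m)%N -> nrm (P m x - P k x) < e.
  move=> hk hm; have := hM k m hk hm; rewrite ltr_pdivlMr // => h1.
  apply: le_lt_trans (sqrt_seq_op_sub x hm) _.
  have h3 : 0 <= (sqrt_seq m).[1] - (sqrt_seq k).[1].
    by rewrite subr_ge0; apply: sqrt_seq_at1_le.
  move: h1 h3; set s := _ - _ => h1 h3.
  have : s * nrm x <= s * (nrm x + 1) by apply: ler_wpM2l => //; lra.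
  lra.
exists M => m n hm hn; case: (leqP n m) => hnm; first exact: key.
by rewrite hnorm_distC; apply: key => //; exact: ltnW.
Qed.

Lemma sqrt_seq_op_cvg : exists Y, forall x, hcvg (fun k => P k x) (Y x).
Proof.
have ex x : exists l, hcvg (fun k => P k x) l by exact: Hcomplete (sqrt_seq_op_cauchy x).
by have [Y hY] := boolp.choice ex; exists Y.
Qed.

Section Limit.
Variable Y : V -> V.
Hypothesis Y_lim : forall x, hcvg (fun k => P k x) (Y x).

Lemma sqrt_seq_lim_lin : linop Y.
Proof.
move=> a x y; apply: (hcvg_unique (Y_lim (a *: x + y))).
apply: hcvg_ext (hcvgD (hcvgZ a (Y_lim x)) (Y_lim y)) _ => n /=.
by rewrite (polyop_lin sqr_lin).
Qed.

Lemma sqrt_seq_lim_contr : bndop Y 1.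
Proof.
move=> x; rewrite mul1r; apply: le_add_eps => e e0.
have [M hM] := Y_lim x e0; have := hM M (leqnn M); have := sqrt_seq_op_contr M x.
have := ler_hnormD (Y x - P M x) (P M x); rewrite subrK [nrm (Y x - _)]hnorm_distC.
lra.
Qed.

Lemma sqrt_seq_lim_selfadj : is_adjoint ip Y Y.
Proof.
move=> x y; apply/eqP; rewrite -subr_eq0; apply/eqP/Normc.eq0_normc/le_anti.
rewrite normc_ge0 andbT.
have c0 : 0 <= nrm x + nrm y by rewrite addr_ge0 ?hnorm_ge0.
apply: (le0_of_le_mul_eps c0) => e e0.
have [M1 h1] := Y_lim x e0; have [M2 h2] := Y_lim y e0.
set n := maxn M1 M2.
have h3 := h1 n (leq_maxl _ _); have h4 := h2 n (leq_maxr _ _).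
have -> : ip (Y x) y - ip x (Y y) = ip (Y x - P n x) y + ip x (P n y - Y y).
  by rewrite ipBl ipBr (polyop_selfadj sqr_selfadj) addrA subrK.
apply: le_trans (le_normcD _ _) _.
have b1 := cauchy_schwarz (Y x - P n x) y; have b2 := cauchy_schwarz x (P n y - Y y).
rewrite hnorm_distC in b1.
have : nrm (P n x - Y x) * nrm y <= e * nrm y by apply: ler_wpM2r; [exact: hnorm_ge0 | exact: ltW].
have : nrm x * nrm (P n y - Y y) <= nrm x * e by apply: ler_wpM2l; [exact: hnorm_ge0 | exact: ltW].
lra.
Qed.

Lemma sqrt_seq_lim_comm x : A (Y x) = Y (A x).
Proof.
have h : hcvg (fun n => A (P n x)) (A (Y x)).
  by apply: (hcvg_le ler01 (Y_lim x)) => n; rewrite -(linB A_lin); exact: A_contr.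
apply: (hcvg_unique h); apply: hcvg_ext (Y_lim (A x)) _ => n.
by rewrite (polyop_comm A_lin).
Qed.

(* Y = (A^2 + Y^2) / 2, from q_(k+1) = (X + q_k^2) / 2 *)
Lemma sqrt_seq_lim_sqr x : Y (Y x) = Y x + Y x - C x.
Proof.
have lim_sqr : hcvg (fun n => P n (P n x)) (Y (Y x)).
  move=> e e0; have e2 : 0 < e / 2 by rewrite divr_gt0.
  have [M1 hM1] := Y_lim x e2; have [M2 hM2] := Y_lim (Y x) e2.
  exists (maxn M1 M2) => n hn.
  have := hM1 n (leq_trans (leq_maxl _ _) hn); have := hM2 n (leq_trans (leq_maxr _ _) hn).
  have -> : P n (P n x) - Y (Y x) = P n (P n x - Y x) + (P n (Y x) - Y (Y x)).
    by rewrite (linB (polyop_lin sqr_lin _)) addrA subrK.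
  have := ler_hnormD (P n (P n x - Y x)) (P n (Y x) - Y (Y x)).
  have := sqrt_seq_op_contr n (P n x - Y x).
  lra.
have lim_next : hcvg (fun n => P n.+1 x) ((2^-1 : R)%:C *: (C x + Y (Y x))).
  apply: hcvg_ext (hcvgZ _ (hcvgD (hcvg_cst (C x)) lim_sqr)) _ => n.
  by rewrite [sqrt_seq n.+1]/= (polyopM sqr_lin) polyopC polyopD (polyopM sqr_lin) polyopX.
have h2 : (2%:R : R[i]) * (2^-1 : R)%:C = 1.
  by rewrite fmorphV rmorph_nat mulfV // pnatr_eq0.
have := hcvg_unique (hcvg_shift (Y_lim x)) lim_next.
move=> /(congr1 (fun v => 2%:R *: v)); rewrite scalerA h2 scale1r => eY.
by rewrite -mulr2n -scaler_nat eY [C x + _]addrC addrK.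
Qed.

End Limit.

Lemma selfadj_contraction_sqrt : exists S : V -> V, [/\ linop S, bndop S 2,
  is_adjoint ip S S, (forall x, A (S x) = S (A x)) & forall x, S (S x) = x - A (A x)].
Proof.
have [Y Y_lim] := sqrt_seq_op_cvg.
exists (fun x => x - Y x); split.
- by move=> a x y; rewrite (sqrt_seq_lim_lin Y_lim) scalerBr opprD addrACA.
- move=> x; apply: le_trans (ler_hnormD _ _) _.
  rewrite hnormN; have := sqrt_seq_lim_contr Y_lim x; have := hnorm_ge0 x; lra.
- by move=> x y; rewrite ipBl ipBr (sqrt_seq_lim_selfadj Y_lim).
- by move=> x; rewrite (linB A_lin) (sqrt_seq_lim_comm Y_lim).
- move=> x; rewrite (linB (sqrt_seq_lim_lin Y_lim)) (sqrt_seq_lim_sqr Y_lim).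
  by rewrite !opprD !opprK !addrA addrNK subrK.
Qed.

Lemma selfadj_contraction_unitary_mean : exists U1 U2 : V -> V,
  [/\ unitary ip U1, unitary ip U2 & A = opscale (2^-1) (opadd U1 U2)].
Proof.
have [S [S_lin S_contr S_selfadj S_commA S_sqr]] := selfadj_contraction_sqrt.
pose U1 := opadd A (opscale 'i%C S).
pose U2 := opadd A (opscale (- 'i%C) S).
have bA : bounded_op ip A by split => //; exists 1.
have bS : bounded_op ip S by split => //; exists 2.
have bU1 : bounded_op ip U1 := bounded_add bA (bounded_scale _ bS).
have bU2 : bounded_op ip U2 := bounded_add bA (bounded_scale _ bS).
have a12 : is_adjoint ip U1 U2.
  by have := is_adjoint_add A_selfadj (is_adjoint_scale 'i%C S_selfadj); rewrite conji.
have U21 x : U2 (U1 x) = x.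
  rewrite /U1 /U2 /opadd /opscale (linD A_lin) (linZ A_lin) (linD S_lin) (linZ S_lin).
  rewrite S_commA scalerDr scalerA mulNr mulii opprK scale1r S_sqr scaleNr.
  by rewrite addrA addrK addrC addrNK.
have U12 x : U1 (U2 x) = x.
  rewrite /U1 /U2 /opadd /opscale (linD A_lin) (linZ A_lin) (linD S_lin) (linZ S_lin).
  rewrite S_commA scalerDr scalerA mulrN mulii opprK scale1r S_sqr scaleNr.
  by rewrite addrA addrNK addrC addrNK.
exists U1, U2; split.
- split => //; rewrite (adjE a12); split; apply: boolp.funext => x /=; [exact: U21 | exact: U12].
- split => //; rewrite (adjE (is_adjoint_sym a12)).
  by split; apply: boolp.funext => x /=; [exact: U12 | exact: U21].
- apply: boolp.funext => x; rewrite /U1 /U2 /opscale /opadd addrACA scaleNr subrr addr0.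
  by rewrite -mulr2n -(scaler_nat 2 (A x)) scalerA mulVf ?scale1r ?pnatr_eq0.
Qed.

End SelfAdjointContraction.

Section AlgebraNorm.
Variable N : (V -> V) -> R.
Hypothesis HN : algebra_norm ip N.
Hypothesis HNsa : selfadjoint_norm ip N.

Lemma N_ge0 T : bounded_op ip T -> 0 <= N T.
Proof. by case: HN => -[h _ _ _] _; exact: h. Qed.

Lemma N_scale a T : bounded_op ip T -> N (opscale a T) = normc a * N T.
Proof. by case: HN => -[_ _ h _] _; exact: h. Qed.

Lemma N_add T S : bounded_op ip T -> bounded_op ip S -> N (opadd T S) <= N T + N S.
Proof. by case: HN => -[_ _ _ h] _; exact: h. Qed.

Lemma N_mul T S : bounded_op ip T -> bounded_op ip S -> N (T \o S) <= N T * N S.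
Proof. by case: HN => _ h; exact: h. Qed.

Lemma N_mean_le T S : bounded_op ip T -> bounded_op ip S ->
  N (opscale (2^-1) (opadd T S)) <= 2^-1 * (N T + N S).
Proof.
move=> hT hS; rewrite N_scale ?normc_half; last exact: bounded_add.
by apply: ler_wpM2l; [rewrite invr_ge0 | exact: N_add].
Qed.

Lemma N_Re_contraction_le (r : R) : (forall U, unitary ip U -> N U <= r) ->
  forall X X', bounded_op ip X -> is_adjoint ip X X' -> bndop X 1 ->
  N (opscale (2^-1) (opadd X X')) <= r.
Proof.
move=> hr X X' hX hXa hX1.
have hX' := is_adjoint_bounded hXa hX.
have hX'1 := is_adjoint_bnd ler01 hXa hX1.
set A := opscale _ _.
have bA : bounded_op ip A := bounded_scale _ (bounded_add hX hX').
have A_selfadj : is_adjoint ip A A.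
  have := is_adjoint_scale (2^-1) (is_adjoint_add hXa (is_adjoint_sym hXa)).
  rewrite fmorphV rmorph_nat.
  by have -> : opadd X' X = opadd X X' by apply: boolp.funext => x; rewrite /opadd addrC.
have A_contr : bndop A 1.
  move=> x; rewrite /A /opscale /opadd hnormZ normc_half mul1r.
  have := ler_hnormD (X x) (X' x); have := hX1 x; have := hX'1 x; lra.
have [U1 [U2 [u1 u2 eA]]] :=
  selfadj_contraction_unitary_mean (bounded_opP bA).1 A_selfadj A_contr.
rewrite eA; apply: le_trans (N_mean_le u1.1 u2.1) _.
have := hr _ u1; have := hr _ u2; lra.
Qed.

Lemma N_contraction_le (r : R) : (forall U, unitary ip U -> N U <= r) ->
  forall T, bounded_op ip T -> bndop T 1 -> N T <= 2 * r.
Proof.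
move=> hr T hT hT1.
have hTa := adjP hT; set T' := adj ip T in hTa *.
have hT' := is_adjoint_bounded hTa hT.
(* T = Re T + i Re (-i T) *)
pose X := opscale (- 'i%C) T; pose X' := opscale 'i%C T'.
have hX : bounded_op ip X := bounded_scale _ hT.
have hX' : bounded_op ip X' := bounded_scale _ hT'.
have hXa : is_adjoint ip X X'.
  by have := is_adjoint_scale (- 'i%C) hTa; rewrite rmorphN /= conji opprK.
have hX1 : bndop X 1.
  by move=> x; rewrite /X /opscale hnormZ normc_opp normci mul1r; exact: hT1.
have n1 := N_Re_contraction_le hr hT hTa hT1.
have n2 := N_Re_contraction_le hr hX hXa hX1.
have c1 : ('i%C : R[i]) * 2^-1 * - 'i%C = 2^-1.
  by rewrite mulrN mulrAC mulii mulN1r opprK.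
have c2 : ('i%C : R[i]) * 2^-1 * 'i%C = - 2^-1 by rewrite mulrAC mulii mulN1r.
have eT : T = opadd (opscale (2^-1) (opadd T T'))
                    (opscale 'i%C (opscale (2^-1) (opadd X X'))).
  apply: boolp.funext => x; rewrite /opadd /opscale /X /X' /opscale.
  rewrite scalerA !scalerDr !scalerA c1 c2 scaleNr.
  have h2 : (2^-1 : R[i]) * 2%:R = 1 by rewrite mulVf // pnatr_eq0.
  rewrite mulr_natr in h2.
  by rewrite addrACA subrr addr0 -scalerDl -mulr2n h2 scale1r.
have b1 : bounded_op ip (opscale (2^-1) (opadd T T')) := bounded_scale _ (bounded_add hT hT').
have b2 : bounded_op ip (opscale (2^-1) (opadd X X')) := bounded_scale _ (bounded_add hX hX').
rewrite eT; apply: le_trans (N_add b1 (bounded_scale _ b2)) _.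
rewrite (N_scale _ b2) normci mul1r; lra.
Qed.

Lemma N_le_sup_unitary T : bounded_op ip T -> opnorm ip T <= 1 ->
  ((N T)%:E <= 2%:E * sup_unitary ip N)%E.
Proof.
move=> hT T1.
have id_unitary : unitary ip id.
  by split; [exact: bounded_id | rewrite (@adjE id id)].
have hs : ((N id)%:E <= sup_unitary ip N)%E by apply: ereal_sup_ubound; exists id.
case E: (sup_unitary ip N) hs => [r| |] hs.
- have hr U : unitary ip U -> N U <= r.
    by move=> hU; rewrite -lee_fin -E; apply: ereal_sup_ubound; exists U.
  rewrite -EFinM lee_fin.
  exact: N_contraction_le hr _ hT (contraction_of_opnorm hT T1).
- by rewrite mulry gtr0_sg ?mul1e ?leey.
- by move: hs; rewrite leeNy_eq.
Qed.

Lemma N_ReOp_le X : bounded_op ip X -> N (ReOp ip X) <= N X.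
Proof.
move=> hX; have hX' := is_adjoint_bounded (adjP hX) hX.
by rewrite /ReOp; apply: le_trans (N_mean_le hX hX') _; rewrite (HNsa hX); lra.
Qed.

Lemma wN_le_N X : bounded_op ip X -> (wN ip N X <= (N X)%:E)%E.
Proof.
move=> hX; apply: ge_ereal_sup => _ [t _ <-]; rewrite lee_fin.
apply: le_trans (N_ReOp_le (bounded_scale _ hX)) _.
by rewrite N_scale // normc_expi mul1r.
Qed.

Lemma N_commutator_le T : bounded_op ip T ->
  N (opsub (T \o adj ip T) (adj ip T \o T)) <= 2 * N T ^+ 2.
Proof.
move=> hT; have hT' := is_adjoint_bounded (adjP hT) hT.
have hTT' := bounded_comp hT hT'; have hT'T := bounded_comp hT' hT.
rewrite opsubE; apply: le_trans (N_add hTT' (bounded_scale _ hT'T)) _.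
rewrite N_scale // normc_opp Normc.normc1 mul1r.
have := N_mul hT hT'; have := N_mul hT' hT; rewrite (HNsa hT) expr2; lra.
Qed.

End AlgebraNorm.
End HilbertSpace.

Unset Implicit Arguments.
Local Close Scope complex_scope.

Theorem corollary2p7 (R : realType) (V : lmodType R[i]) (ip : V -> V -> R[i])
  (Hip : is_inner_product ip) (Hcomplete : hcomplete ip)
  (N : (V -> V) -> R)
  (HNalg : algebra_norm ip N) (HNsa : selfadjoint_norm ip N)
  (HNwui : weakly_unitarily_invariant ip N)
  (T : V -> V) (HT : bounded_op ip T) (HT1 : opnorm ip T <= 1) :
  (wN ip N (opsub (T \o adj ip T) (adj ip T \o T))
    <= 4%:E * (N T)%:E * sup_unitary ip N)%E.
Proof.
have hT' := is_adjoint_bounded Hip (adjP Hip Hcomplete HT) HT.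
have hD := bounded_sub Hip (bounded_comp HT hT') (bounded_comp hT' HT).
apply: le_trans (wN_le_N Hip Hcomplete HNalg HNsa hD) _.
apply: (@le_trans _ _ (2 * N T ^+ 2)%:E).
  by rewrite lee_fin (N_commutator_le Hip Hcomplete HNalg HNsa HT).
have -> : (4%:E * (N T)%:E = (2 * N T)%:E * 2%:E :> \bar R)%E.
  by rewrite -!EFinM; congr EFin; ring.
rewrite expr2 mulrA EFinM -muleA.
apply: lee_pmul (lexx _) (N_le_sup_unitary Hip Hcomplete HNalg HT HT1).
  by rewrite lee_fin mulr_ge0 ?ler0n ?(N_ge0 HNalg HT).
by rewrite lee_fin (N_ge0 HNalg HT).
Qed.
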